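(* Let $\lambda\in\mathbb R$ and $\gamma\in[0,\tfrac12]$, and for $\delta\in[\gamma/2,\tfrac12]$ define \[\vartheta^\star(\delta)=2\big(\lambda+H(\delta)-1\big)+(1-\gamma)\Big(1-H\Big(\frac{\delta-\gamma/2}{1-\gamma}\Big)\Big)\] (for $\gamma=1$ not applicable; here $1-\gamma\ge \tfrac12$). Then $\vartheta^\star$ attains its minimum over $[\gamma/2,\tfrac12]$ at $\delta_{\min}=\tfrac12\big(1-\sqrt{1-2\gamma}\big)$, and $\vartheta^\star(\delta_{\min})=2\lambda+H(\gamma)-1$.
   Context: All logarithms are base 2. $H(x)=-x\log x-(1-x)\log(1-x)$ for $x\in(0,1)$, $H(0)=H(1)=0$. *)

From Stdlib Require Import Reals Lra.
Open Scope R_scope.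

Definition log2 (x : R) : R := ln x / ln 2.

(* binary entropy: H(x) = -x log x - (1-x) log(1-x) on (0,1), H(0)=H(1)=0
   (values outside [0,1] are never used). *)
Definition H (x : R) : R :=
  if Rlt_dec 0 x then
    if Rlt_dec x 1 then - x * log2 x - (1 - x) * log2 (1 - x) else 0
  else 0.

Definition theta_star (lam gam delta : R) : R :=
  2 * (lam + H delta - 1) + (1 - gam) * (1 - H ((delta - gam / 2) / (1 - gam))).

Definition delta_min (gam : R) : R := (1 - sqrt (1 - 2 * gam)) / 2.

From Stdlib Require Import Reals Lra Psatz List.
Import ListNotations.
Open Scope R_scope.

(* The proof is an instance of Gibbs' inequality.  Writing u = d - g/2 and
   v = 1 - g/2 - d (so that u + v = 1 - g), the "grouping" identity for the
   binary entropy, (1-g) H(u/(1-g)) ln 2 = (1-g) ln (1-g) - u ln u - v ln v,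
   turns theta_star into an expression in natural logarithms, and one checks
   that

     (theta_star(d) - (2 lam + H g - 1)) ln 2 = D(P || Q),

   the relative entropy of P = (u, g/2, g/2, v) with respect to the product
   distribution Q = (d^2, d(1-d), d(1-d), (1-d)^2) of two independent coins
   each showing heads with probability d.  Gibbs' inequality gives D(P || Q) >= 0, and D(P || Q) = 0 when
   P = Q, i.e. when d (1 - d) = g/2, which is exactly d = delta_min g. *)

Definition rel_entropy (pq : list (R * R)) : R :=
  fold_right (fun x acc => fst x * ln (fst x) - fst x * ln (snd x) + acc) 0 pq.

Definition total (xs : list R) : R := fold_right Rplus 0 xs.

Lemma ln_le_sub1 (y : R) : 0 < y -> ln y <= y - 1.
Proof.
  intro hy. pose proof (exp_ineq1_le (ln y)) as h. rewrite exp_ln in h; lra.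
Qed.

Lemma ln_div (x y : R) : 0 < x -> 0 < y -> ln (x / y) = ln x - ln y.
Proof.
  intros hx hy. unfold Rdiv.
  rewrite ln_mult, ln_Rinv; [ring | lra | lra | now apply Rinv_0_lt_compat].
Qed.

(* [u/s ln (u/s)] splits as a difference of logarithms also for [u = 0]. *)
Lemma xln_div (u s : R) : 0 <= u -> 0 < s -> u / s * ln (u / s) = u / s * (ln u - ln s).
Proof.
  intros hu hs. destruct (Req_dec u 0) as [-> | hu0].
  - unfold Rdiv. ring.
  - rewrite ln_div by lra. reflexivity.
Qed.

Lemma gibbs_term (p q : R) : 0 <= p -> 0 < q -> p - q <= p * ln p - p * ln q.
Proof.
  intros hp hq. destruct (Req_dec p 0) as [-> | hp0]; [lra |].
  assert (hl : ln (q / p) <= q / p - 1) by (apply ln_le_sub1, Rdiv_lt_0_compat; lra).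
  rewrite ln_div in hl by lra.
  assert (hm : p * (ln q - ln p) <= p * (q / p - 1)) by (apply Rmult_le_compat_l; lra).
  replace (p * (q / p - 1)) with (q - p) in hm by (field; lra). lra.
Qed.

Lemma gibbs_inequality (pq : list (R * R)) :
  Forall (fun x => 0 <= fst x /\ 0 < snd x) pq ->
  total (map fst pq) = total (map snd pq) -> 0 <= rel_entropy pq.
Proof.
  intros hpos hmass.
  enough (total (map fst pq) - total (map snd pq) <= rel_entropy pq) by lra.
  clear hmass. induction hpos as [| [p q] pq [hp hq] _ IH]; simpl in *; [lra |].
  pose proof (gibbs_term p q hp hq). lra.
Qed.

Lemma rel_entropy_diag (ps : list R) : rel_entropy (map (fun p => (p, p)) ps) = 0.
Proof. induction ps as [| p ps IH]; simpl; [reflexivity | rewrite IH; ring]. Qed.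

Lemma ln2_pos : 0 < ln 2.
Proof. pose proof ln_lt_2; lra. Qed.

Lemma H_ln2 (x : R) : 0 <= x <= 1 -> H x * ln 2 = - (x * ln x) - (1 - x) * ln (1 - x).
Proof.
  intros hx. pose proof ln2_pos as hln2. unfold H, log2.
  destruct (Rlt_dec 0 x); destruct (Rlt_dec x 1).
  - field. lra.
  - replace x with 1 by lra. rewrite ln_1. ring.
  - replace x with 0 by lra. rewrite Rminus_0_r, ln_1. ring.
  - lra.
Qed.

Lemma H_grouping (u v s : R) : 0 <= u -> 0 <= v -> u + v = s -> 0 < s ->
  s * (H (u / s) * ln 2) = s * ln s - u * ln u - v * ln v.
Proof.
  intros hu hv <- hs.
  assert (hus : 0 <= u / (u + v) <= 1).
  { split; [unfold Rdiv; apply Rmult_le_pos; [lra | left; apply Rinv_0_lt_compat; lra] |].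
    apply Rmult_le_reg_r with (u + v); [lra |].
    replace (u / (u + v) * (u + v)) with u by (field; lra). lra. }
  rewrite H_ln2 by exact hus.
  replace (1 - u / (u + v)) with (v / (u + v)) by (field; lra).
  rewrite !xln_div by lra. field. lra.
Qed.

Lemma delta_min_spec (g : R) : 0 <= g <= 1 / 2 ->
  g / 2 <= delta_min g <= 1 / 2 /\ delta_min g * (1 - delta_min g) = g / 2.
Proof.
  intros hg. unfold delta_min.
  assert (hs0 : 0 <= sqrt (1 - 2 * g)) by apply sqrt_pos.
  assert (hs2 : sqrt (1 - 2 * g) * sqrt (1 - 2 * g) = 1 - 2 * g) by (apply sqrt_sqrt; lra).
  assert (hs1 : sqrt (1 - 2 * g) <= 1) by nra.
  split; [split |]; nra.
Qed.

Lemma delta_min_0 : delta_min 0 = 0.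
Proof. unfold delta_min. rewrite Rmult_0_r, Rminus_0_r, sqrt_1. field. Qed.

(* The distribution P of the opening comment, paired with the product
   distribution Q of two coins with bias [d]. *)
Definition gibbs_pairs (g d : R) : list (R * R) :=
  [(d - g / 2, d * d); (g / 2, d * (1 - d)); (g / 2, d * (1 - d));
   (1 - g / 2 - d, (1 - d) * (1 - d))].

Lemma theta_gap (lam g d : R) : 0 <= g <= 1 / 2 -> g / 2 <= d <= 1 / 2 -> 0 < d ->
  (theta_star lam g d - (2 * lam + H g - 1)) * ln 2 = rel_entropy (gibbs_pairs g d).
Proof.
  intros hg hd hd0.
  pose proof (H_ln2 d ltac:(lra)) as hHd.
  pose proof (H_ln2 g ltac:(lra)) as hHg.
  assert (hHq : (1 - g) * (H ((d - g / 2) / (1 - g)) * ln 2) =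
                (1 - g) * ln (1 - g) - (d - g / 2) * ln (d - g / 2)
                - (1 - g / 2 - d) * ln (1 - g / 2 - d))
    by (apply H_grouping; lra).
  pose proof (xln_div g 2 ltac:(lra) ltac:(lra)) as hg2.
  unfold theta_star, gibbs_pairs, rel_entropy; simpl.
  rewrite !ln_mult by lra.
  lra.
Qed.

Lemma gibbs_pairs_delta_min (g : R) : 0 <= g <= 1 / 2 ->
  gibbs_pairs g (delta_min g) =
  map (fun p => (p, p)) [delta_min g * delta_min g; g / 2; g / 2;
                         (1 - delta_min g) * (1 - delta_min g)].
Proof.
  intros hg. destruct (delta_min_spec g hg) as [_ hprod].
  unfold gibbs_pairs; simpl.
  replace (delta_min g - g / 2) with (delta_min g * delta_min g) by nra.
  replace (1 - g / 2 - delta_min g) with ((1 - delta_min g) * (1 - delta_min g)) by nra.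
  rewrite hprod. reflexivity.
Qed.

Lemma theta_at_delta_min (lam g : R) : 0 <= g <= 1 / 2 ->
  theta_star lam g (delta_min g) = 2 * lam + H g - 1.
Proof.
  intros hg. destruct (delta_min_spec g hg) as [hbounds _].
  destruct (Req_dec g 0) as [-> | hg0].
  - unfold theta_star. rewrite delta_min_0.
    replace ((0 - 0 / 2) / (1 - 0)) with 0 by field.
    assert (hH0 : H 0 = 0) by (unfold H; destruct (Rlt_dec 0 0); lra).
    rewrite hH0. ring.
  - pose proof (theta_gap lam g (delta_min g) hg hbounds ltac:(nra)) as hgap.
    rewrite gibbs_pairs_delta_min, rel_entropy_diag in hgap by exact hg.
    pose proof ln2_pos. nra.
Qed.

Theorem mainTheorem4 (lam gam : R) (hg0 : 0 <= gam) (hg1 : gam <= 1 / 2) :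
  gam / 2 <= delta_min gam <= 1 / 2 /\
  (forall delta : R, gam / 2 <= delta <= 1 / 2 ->
     theta_star lam gam (delta_min gam) <= theta_star lam gam delta) /\
  theta_star lam gam (delta_min gam) = 2 * lam + H gam - 1.
Proof.
  assert (hg : 0 <= gam <= 1 / 2) by lra.
  destruct (delta_min_spec gam hg) as [hbounds _].
  pose proof (theta_at_delta_min lam gam hg) as hvalue.
  split; [exact hbounds | split; [| exact hvalue]].
  intros d hd. rewrite hvalue.
  destruct (Req_dec d 0) as [hd0 | hd0].
  - (* d = 0 forces gam = 0, and then d is the minimiser itself. *)
    assert (gam = 0) as -> by lra. rewrite hd0, <- hvalue, delta_min_0. lra.
  - pose proof (theta_gap lam gam d hg hd ltac:(lra)) as hgap.
    assert (hD : 0 <= rel_entropy (gibbs_pairs gam d)).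
    { apply gibbs_inequality; unfold gibbs_pairs; simpl; [| ring].
      repeat (apply Forall_cons; [simpl; split; nra |]). apply Forall_nil. }
    pose proof ln2_pos. nra.
Qed.
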